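(* Let $\mathcal G=\langle V=V_{\mathrm{Min}}\uplus V_{\mathrm{Max}}, V_T, A, E, \omega\rangle$ be a finite weighted game and $c\colon V_T\to\mathbb Z$. Assume that the subgraph induced by $V\setminus V_T$ is strongly connected, that every cycle all of whose vertices lie in $V\setminus V_T$ has negative weight, and that no vertex has value $+\infty$ or $-\infty$ (with respect to $c$). Let $n=|V\setminus V_T|$. Define $\vec x^0$ by $\vec x^0_v=c(v)$ for $v\in V_T$ and $\vec x^0_v=-\infty$ for $v\in V\setminus V_T$, and $\vec x^i=F(\vec x^{i-1})$ for $i>0$. Then $\vec x^{n+k}=\vec x^n$ for all $k\ge 0$.
   Context: A weighted game has vertices $V$ partitioned into vertices of Min and of Max, targets $V_T\subseteq V_{\mathrm{Min}}$, alphabet $A$, edges $E\subseteq V\times A\times V$, weights $\omega\colon E\to\mathbb Z$, and is deadlock-free and deterministic. A cycle is a finite sequence of consecutive edges starting and ending at the same vertex (length $\ge1$); its weight is the sum of its edge weights. With target values $c$, the weight of a play is $+\infty$ if it never visits $V_T$, and otherwise the sum of its edge weights up to the first visit of some $t\in V_T$ plus $c(t)$; the value of $v$ is $\inf_{\sigma_{\mathrm{Min}}}\sup_{\sigma_{\mathrm{Max}}}$ (equal to $\sup_{\sigma_{\mathrm{Max}}}\inf_{\sigma_{\mathrm{Min}}}$) of the weight of the outcome from $v$, strategies choosing an outgoing edge after each finite play ending in a vertex of the player. The operator $F$ on $(\mathbb Z\cup\{-\infty,+\infty\})^V$ is $F(\vec x)_v=c(v)$ if $v\in V_T$, $F(\vec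 x)_v=\min_{e=(v,a,v')\in E}\omega(e)+\vec x_{v'}$ if $v\in V_{\mathrm{Min}}\setminus V_T$, and $F(\vec x)_v=\max_{e=(v,a,v')\in E}\omega(e)+\vec x_{v'}$ if $v\in V_{\mathrm{Max}}$. *)

From HB Require Import structures.
From mathcomp Require Import all_boot all_order all_algebra.
From mathcomp Require Import boolp classical_sets reals constructive_ereal ereal Rstruct.
Set Implicit Arguments. Unset Strict Implicit. Unset Printing Implicit Defensive.
Import Order.TTheory GRing.Theory Num.Theory.
Local Open Scope ring_scope.
Local Open Scope classical_set_scope.
Local Open Scope ereal_scope.

Notation RR := Rdefinitions.R.

Section Game.
(* A weighted game: vertices V (finite), Min's vertices isMin (Max owns the
   rest), targets VT, alphabet A (finite), edges E, weights w. *)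
Variables (V A : finType) (isMin : pred V) (VT : pred V)
          (E : {set V * A * V}) (w : V * A * V -> int) (c : V -> int).

Definition src (e : V * A * V) : V := e.1.1.
Definition tgt (e : V * A * V) : V := e.2.

Definition deadlock_free : Prop := forall v, exists2 e, e \in E & src e = v.
Definition deterministic : Prop :=
  forall v a v1 v2, (v, a, v1) \in E -> (v, a, v2) \in E -> v1 = v2.

Definition last_vertex (v0 : V) (h : seq (V * A * V)) : V := last v0 (map tgt h).

(* A strategy maps a finite play (start vertex, edges) to the next edge; it is
   a strategy for the player owning the vertices in [own] if, whenever the
   play ends in a vertex of that player, it picks an outgoing edge there. *)
Definition strategy := V -> seq (V * A * V) -> V * A * V.
Definition is_strategy (own : pred V) (s : strategy) : Prop :=
  forall v0 h, own (last_vertex v0 h) ->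
    s v0 h \in E /\ src (s v0 h) = last_vertex v0 h.

Fixpoint outcome_prefix (v0 : V) (sMin sMax : strategy) (k : nat)
  : seq (V * A * V) :=
  match k with
  | 0 => [::]
  | k'.+1 => let h := outcome_prefix v0 sMin sMax k' in
             rcons h (if isMin (last_vertex v0 h) then sMin v0 h else sMax v0 h)
  end.

Definition outcome_vertex v0 sMin sMax k :=
  last_vertex v0 (outcome_prefix v0 sMin sMax k).

Definition outcome_weight (v0 : V) (sMin sMax : strategy) : \bar RR :=
  match pselect (exists i, VT (outcome_vertex v0 sMin sMax i)) with
  | left H => let i := ex_minn H in
      (((\sum_(e <- outcome_prefix v0 sMin sMax i) w e
          + c (outcome_vertex v0 sMin sMax i))%R)%:~R)%:E
  | right _ => +oo
  end.

Definition game_value (v : V) : \bar RR :=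
  ereal_inf [set ereal_sup [set outcome_weight v sMin sMax
                             | sMax in [set s | is_strategy (predC isMin) s]]
            | sMin in [set s | is_strategy isMin s]].

Definition Fop (x : V -> \bar RR) (v : V) : \bar RR :=
  if VT v then ((c v)%:~R)%:E
  else if isMin v then
    \big[Order.min/+oo]_(e in E | src e == v) (((w e)%:~R)%:E + x (tgt e))
  else
    \big[Order.max/-oo]_(e in E | src e == v) (((w e)%:~R)%:E + x (tgt e)).

Definition x0 (v : V) : \bar RR := if VT v then ((c v)%:~R)%:E else -oo.

Definition inner_rel : rel V :=
  fun u v => [&& ~~ VT u, ~~ VT v & [exists a, (u, a, v) \in E]].

Definition inner_strongly_connected : Prop :=
  forall u v, ~~ VT u -> ~~ VT v -> connect inner_rel u v.

Definition inner_cycle (p : seq (V * A * V)) : Prop :=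
  match p with
  | [::] => False
  | e0 :: _ =>
      [/\ all (fun e => e \in E) p,
          all (fun e => ~~ VT (src e) && ~~ VT (tgt e)) p,
          path (fun e f => tgt e == src f) e0 (behead p)
        & tgt (last e0 p) = src e0]
  end.

Definition cycle_weight (p : seq (V * A * V)) : int := (\sum_(e <- p) w e)%R.

End Game.

From HB Require Import structures.
From mathcomp Require Import all_boot all_order all_algebra.
From mathcomp Require Import boolp classical_sets reals constructive_ereal ereal Rstruct.
Import Order.TTheory GRing.Theory Num.Theory.
Local Open Scope ring_scope.

(* The iterates x^m are nondecreasing in m (x^0 <= F x^0 and F is monotone) and
   never +oo (deadlock-freedom).  A strict increase x^m(v) < x^(m+1)(v) at a
   non-target vertex is caused by an edge e = (v, a, v') with a strict increase
   x^(m-1)(v') < x^m(v') and x^(m+1)(v) <= w(e) + x^m(v').  If x^(n+1) were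
   not x^n, following these causes for n steps would visit n + 1 non-target
   vertices, hence close an inner cycle; summing the inequalities around it
   gives x^j(u) <= w(cycle) + x^j'(u) with j' <= j and x^j'(u) finite, which
   contradicts w(cycle) < 0.  So x^(n+1) = x^n and the iteration is stationary
   from n on. *)

Lemma exists_repeat_of_card_le {T : finType} (P : pred T) (u : nat -> T) (N : nat) :
  (#|P| <= N)%N -> (forall j, (j <= N)%N -> P (u j)) ->
  exists a b, (a < b <= N)%N /\ u a = u b.
Proof.
move=> cardP Pu.
have : ~~ uniq (map u (iota 0 N.+1)).
  apply/negP => uniq_u.
  suff : (N.+1 <= #|P|)%N by rewrite ltnNge cardP.
  apply/card_geqP; exists (map u (iota 0 N.+1)); split => //.
    by rewrite size_map size_iota.
  by move=> x /mapP [j]; rewrite mem_iota add0n ltnS => jN ->; apply: Pu.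
move/(uniqPn (u 0%N)) => [a [b []]]; rewrite size_map size_iota ltnS => ab bN.
rewrite !(nth_map 0%N) ?size_iota ?ltnS ?(ltnW (leq_trans ab bN)) //.
rewrite !nth_iota ?ltnS ?(ltnW (leq_trans ab bN)) // !add0n => uab.
by exists a, b; rewrite ab.
Qed.

(* [e0] is only a filler for [f]: for [N = 0] the type [U] may be empty. *)
Lemma choose_walk {T U : Type} (P : nat -> T -> Prop) (R : nat -> T -> U -> Prop)
    (next : U -> T) (e0 : U) (t0 : T) (N : nat) :
  P 0%N t0 ->
  (forall j t, (j < N)%N -> P j t -> exists2 e, R j t e & P j.+1 (next e)) ->
  exists u f, [/\ u 0%N = t0, forall j, (j <= N)%N -> P j (u j) &
    forall j, (j < N)%N -> R j (u j) (f j) /\ next (f j) = u j.+1].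
Proof.
move=> P0; elim: N => [|N IH] step.
  by exists (fun=> t0), (fun=> e0); split=> // j; rewrite leqn0 => /eqP ->.
have [|u [f [u0 Pu Ru]]] := IH; first by move=> j t /ltnW; apply: step.
have [e Re Pe] := step N (u N) (ltnSn N) (Pu N (leqnn N)).
exists (fun j => if j == N.+1 then next e else u j).
exists (fun j => if j == N then e else f j).
split=> [//|j|j].
  by rewrite leq_eqVlt ltnS; case: eqP => [->|_ /= /Pu].
rewrite ltnS leq_eqVlt => /orP [/eqP ->|jN].
  by rewrite eqxx (ltn_eqF (ltnSn N)) eqxx.
by rewrite (ltn_eqF (leqW jN)) (ltn_eqF jN) eqSS (ltn_eqF jN); apply: Ru.
Qed.

Lemma telescope_le (R : realDomainType) (B : nat -> \bar R) (s : nat -> int) (a k : nat) :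
  (forall j, (a <= j < a + k)%N -> (B j <= ((s j)%:~R)%:E + B j.+1)%E) ->
  (B a <= ((\sum_(j <- iota a k) s j)%:~R)%:E + B (a + k)%N)%E.
Proof.
elim: k a => [|k IH] a Bs; first by rewrite big_nil addn0 add0e.
rewrite /= big_cons intrD EFinD -addeA addnS -addSn.
apply: le_trans (Bs a _) _; first by rewrite leqnn addnS ltnS leq_addr.
apply: leeD2l; apply: IH => j /andP [aj jk]; apply: Bs.
by rewrite (ltnW aj) addnS -addSn.
Qed.

Lemma walk_inner_cycle {V A : finType} (VT : pred V) (E : {set V * A * V})
    (u : nat -> V) (f : nat -> V * A * V) (a k : nat) :
  (forall j, (a <= j <= a + k.+1)%N -> ~~ VT (u j)) ->
  (forall j, (a <= j < a + k.+1)%N ->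
     [/\ f j \in E, src (f j) = u j & tgt (f j) = u j.+1]) ->
  u (a + k.+1)%N = u a ->
  inner_cycle VT E (map f (iota a k.+1)).
Proof.
move=> inner walk closed.
have mem_walk e : e \in map f (iota a k.+1) -> exists2 j, (a <= j < a + k.+1)%N & e = f j.
  by case/mapP => j; rewrite mem_iota; exists j.
have nth_walk i : (i <= k)%N -> nth (f a) (map f (iota a k.+1)) i = f (a + i)%N.
  by move=> ik; rewrite (nth_map a) ?size_iota ?nth_iota.
have walk_at i : (i <= k)%N ->
    [/\ f (a + i)%N \in E, src (f (a + i)%N) = u (a + i)%N & tgt (f (a + i)%N) = u (a + i).+1].
  by move=> ik; apply: walk; rewrite leq_addr ltn_add2l.
have walk_E : all (fun e => e \in E) (map f (iota a k.+1)).
  by apply/allP => _ /mem_walk [j /walk [fE _ _] ->].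
have walk_inner : all (fun e => ~~ VT (src e) && ~~ VT (tgt e)) (map f (iota a k.+1)).
  apply/allP => _ /mem_walk [j ajk ->]; have [_ -> ->] := walk j ajk.
  case/andP: ajk => aj jk; apply/andP; split; apply: inner.
    by rewrite aj (ltnW jk).
  by rewrite (leqW aj) jk.
split=> //.
  apply/(pathP (f a)) => i; rewrite size_map size_iota => ik.
  rewrite nth_behead -/(map f (iota a k.+1)) (nth_walk i (ltnW ik)) nth_walk //.
  have [_ _ ->] := walk_at i (ltnW ik); have [_ -> _] := walk_at i.+1 ik.
  by rewrite addnS.
rewrite (last_nth (f a)) size_map size_iota /= nth_walk //.
have [_ _ ->] := walk_at k (leqnn k).
by move: (walk_at 0%N (leq0n k)); rewrite addn0 -addnS closed => -[_ ->].
Qed.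

Section ValueIteration.
Local Open Scope ereal_scope.
Context {V A : finType} (isMin : pred V) {VT : pred V} {E : {set V * A * V}}
        {w : V * A * V -> int} (c : V -> int).

Local Notation F := (Fop isMin VT E w c).
Local Notation xs m := (iter m F (x0 VT c)).
Local Notation wE e := (((w e)%:~R)%:E : \bar RR).

Lemma Fop_le x y : (forall v, x v <= y v) -> forall v, F x v <= F y v.
Proof.
move=> xy v; rewrite /Fop; case: (VT v) => //.
by case: (isMin v); [apply: le_bigmin2 | apply: le_bigmax2] => e _; apply: leeD2l.
Qed.

Lemma iter_Fop_target m v : VT v -> xs m v = ((c v)%:~R)%:E.
Proof. by case: m => [|m] vT; rewrite /= /Fop /x0 vT. Qed.

Lemma iter_Fop_le m m' v : (m <= m')%N -> xs m v <= xs m' v.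
Proof.
have xs_le_succ k u : xs k u <= xs k.+1 u.
  elim: k u => [|k IH] u /=; last exact: Fop_le.
  by rewrite /x0; case: ifP => [uT|_]; [rewrite /Fop uT | exact: leNye].
exact: (@homo_leq _ (fun k => xs k v) (fun a b => a <= b) lexx
          (fun y x z => @le_trans _ _ y x z) (fun k => xs_le_succ k v)).
Qed.

Lemma iter_Fop_lt_succ_inner m v : xs m v < xs m.+1 v -> ~~ VT v.
Proof. by apply: contraTN => vT; rewrite !iter_Fop_target // ltxx. Qed.

Hypothesis edge_from : deadlock_free E.

Lemma Fop_lt_pinfty x : (forall v, x v < +oo) -> forall v, F x v < +oo.
Proof.
move=> xfin v; rewrite /Fop; case: (VT v); first exact: ltry.
have term_fin e : wE e + x (tgt e) < +oo by apply: lte_add_pinfty; [exact: ltry | exact: xfin].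
case: (isMin v).
  have [e eE ev] := edge_from v.
  by apply: le_lt_trans (term_fin e); apply: bigmin_le_cond; rewrite eE ev /=.
by apply/bigmax_ltP; split=> [|e _]; [exact: ltNye | exact: term_fin].
Qed.

Lemma iter_Fop_lt_pinfty m v : xs m v < +oo.
Proof.
elim: m v => [|m IH] v /=; last exact: Fop_lt_pinfty.
by rewrite /x0; case: (VT v); [exact: ltry | exact: ltNye].
Qed.

Lemma Fop_lt_witness x y v : F x v < F y v ->
  exists2 e, (e \in E) && (src e == v) & x (tgt e) < y (tgt e) /\ F y v <= wE e + y (tgt e).
Proof.
have [e0 e0E e0v] := edge_from v.
pose out e := (e \in E) && (src e == v).
have e0P : out e0 by rewrite /out e0E e0v /=.
rewrite /Fop; case: (VT v); first by rewrite ltxx.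
have wfin e : wE e \is a fin_num by [].
case: (isMin v) => lt_xy.
- have [e eP xe] := eq_bigmin e0 out (fun e => wE e + x (tgt e)) e0P (fun _ _ => leey _).
  have ye := bigmin_le_cond +oo (fun e => wE e + y (tgt e)) eP.
  exists e => //; split=> //.
  by rewrite -(lteD2lE _ _ (wfin e)) -xe (lt_le_trans lt_xy).
- have [e eP ye] := eq_bigmax e0 out (fun e => wE e + y (tgt e)) e0P (fun _ _ => leNye _).
  have xe := le_bigmax_cond -oo (fun e => wE e + x (tgt e)) eP.
  exists e => //; split; last by rewrite ye.
  by rewrite -(lteD2lE _ _ (wfin e)) -ye (le_lt_trans xe).
Qed.

Lemma iter_Fop_increase_walk m v0 : xs m v0 < xs m.+1 v0 ->
  exists u f, [/\ u 0%N = v0,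
    forall j, (j <= m)%N -> xs (m - j) (u j) < xs (m - j).+1 (u j) &
    forall j, (j < m)%N -> [/\ f j \in E, src (f j) = u j, tgt (f j) = u j.+1 &
      xs (m - j).+1 (u j) <= wE (f j) + xs (m - j) (u j.+1)]].
Proof.
move=> incr; have [e0 _ _] := edge_from v0.
pose P j t : Prop := xs (m - j) t < xs (m - j).+1 t.
pose R j t e := [/\ e \in E, src e = t & xs (m - j).+1 t <= wE e + xs (m - j) (tgt e)].
have [|j t jm|u [f [u0 Pu Rf]]] := choose_walk P R (@tgt _ _) e0 v0 m.
- by rewrite /P subn0.
- rewrite /P -(subnSK jm) => /Fop_lt_witness [e /andP [eE /eqP ev] [incr_tgt bound]].
  by exists e => //; split; rewrite // -(subnSK jm).
- exists u, f; split=> // j /Rf [[fE fsrc bound] ftgt].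
  by rewrite -ftgt.
Qed.

Hypothesis inner_cycle_neg : forall p, inner_cycle VT E p -> (cycle_weight w p < 0)%R.

Lemma iter_Fop_succ_card : xs #|[pred v | ~~ VT v]|.+1 = xs #|[pred v | ~~ VT v]|.
Proof.
set n := #|_|; apply: funext => v0; apply/le_anti.
rewrite [X in _ && X]iter_Fop_le // andbT leNgt; apply/negP.
move=> /iter_Fop_increase_walk [u [f [_ incr walk]]].
have inner j : (j <= n)%N -> ~~ VT (u j) by move/incr/iter_Fop_lt_succ_inner.
have [a [k [akn closed]]] : exists a k, (a + k.+1 <= n)%N /\ u (a + k.+1)%N = u a.
  have [a [b [/andP [ab bn] uab]]] := exists_repeat_of_card_le _ u _ (leqnn n) inner.
  by exists a, (b - a.+1)%N; rewrite addnS -addSn subnKC.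
have cycle_neg : (cycle_weight w (map f (iota a k.+1)) < 0)%R.
  apply/inner_cycle_neg/walk_inner_cycle/closed => j /andP [_ jk].
    exact/inner/(leq_trans jk akn).
  by have [] := walk j (leq_trans jk akn).
move: cycle_neg; rewrite /cycle_weight big_map; set S := (\sum_(j <- _) _)%R => S_neg.
pose B j := xs (n - j).+1 (u j).
have B_telescope : B a <= (S%:~R)%:E + B (a + k.+1)%N.
  apply: telescope_le => j /andP [_ /leq_trans/(_ akn) jn].
  by have [_ _ _ bound] := walk j jn; rewrite /B (subnSK jn).
have B_le : B (a + k.+1)%N <= B a.
  by rewrite /B closed iter_Fop_le // ltnS leq_sub2l // leq_addr.
have B_fin : B (a + k.+1)%N \is a fin_num.
  rewrite fin_numElt iter_Fop_lt_pinfty andbT.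
  exact: le_lt_trans (leNye _) (incr _ akn).
have := le_trans B_le B_telescope.
by rewrite leNgt gteDr // lte_fin ltrz0 S_neg.
Qed.
End ValueIteration.

Theorem proposition4 (V A : finType) (isMin : pred V) (VT : pred V)
  (E : {set V * A * V}) (w : V * A * V -> int) (c : V -> int) :
  (forall v, VT v -> isMin v) ->
  deadlock_free E ->
  deterministic E ->
  inner_strongly_connected VT E ->
  (forall p, inner_cycle VT E p -> (cycle_weight w p < 0)%R) ->
  (forall v, game_value isMin VT E w c v != +oo%E /\
             game_value isMin VT E w c v != -oo%E) ->
  let n := #|[pred v | ~~ VT v]| in
  forall k v,
    iter (n + k) (Fop isMin VT E w c) (x0 VT c) v
    = iter n (Fop isMin VT E w c) (x0 VT c) v.
Proof.
move=> _ edge_from _ _ inner_cycle_neg _ n k v.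
have stable := iter_Fop_succ_card isMin c edge_from inner_cycle_neg.
by rewrite addnC iterD iter_fix.
Qed.
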